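(* For every $M\in\Lambda$, the set $\mathcal A(M)$ is either empty or an ideal (i.e. non-empty, directed and downward closed) with respect to $\sqsubseteq$.
   Context: Call-by-value $\lambda$-calculus with permutations: $\lambda$-terms and values are $M,N::=V\mid MN$, $V::=x\mid\lambda x.M$, up to $\alpha$-conversion. Rules: $(\beta_v)$ $(\lambda x.M)V\to M\{x:=V\}$ if $V$ is a value; $(\sigma_1)$ $(\lambda x.M)NP\to(\lambda x.MP)N$ if $x\notin\mathrm{FV}(P)$; $(\sigma_3)$ $V((\lambda x.M)N)\to(\lambda x.VM)N$ if $V$ is a value and $x\notin\mathrm{FV}(V)$. $\to_{\mathsf v}$ is their contextual closure, $\twoheadrightarrow_{\mathsf v}$ its reflexive-transitive closure. $\Lambda_\bot$ is the set of $\lambda$-terms possibly containing a constant $\bot$; $\sqsubseteq$ is the smallest context-closed preorder on $\Lambda_\bot$ with $\bot\sqsubseteq x$ and $\bot\sqsubseteq\lambda x.M$. Approximants $\mathcal A$ ($k\ge0$): $A::=B\mid C$; $B::=x\mid\lambda x.A\mid\bot\mid xBA_1\cdots A_k$; $C::=(\lambda x.A)(yBA_1\cdots A_k)$. $\mathcal A(M)=\{A\in\mathcal A\mid\exists N\in\Lambda,\ M\twoheadrightarrow_{\mathsf v}N,\ A\sqsubseteq N\}$. Directed and downward closed are understood within $\mathcal A$. *)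

(* Lambda-terms with de Bruijn indices (so terms are
   identified up to alpha-conversion), with an extra constant Bot. *)
From Stdlib Require Import Arith Relations.

Inductive term : Type :=
| Var : nat -> term
| Lam : term -> term
| App : term -> term -> term
| Bot : term.

(* Lambda: terms without Bot *)
Fixpoint bot_free (t : term) : Prop :=
  match t with
  | Var _ => True
  | Lam t => bot_free t
  | App t u => bot_free t /\ bot_free u
  | Bot => False
  end.

Definition is_value (t : term) : Prop :=
  match t with
  | Var _ | Lam _ => True
  | _ => False
  end.

Fixpoint lift (k : nat) (t : term) : term :=
  match t with
  | Var n => if k <=? n then Var (S n) else Var n
  | Lam t => Lam (lift (S k) t)
  | App t u => App (lift k t) (lift k u)
  | Bot => Bot
  end.

Fixpoint subst (k : nat) (u : term) (t : term) : term :=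
  match t with
  | Var n =>
      if n =? k then u
      else if k <? n then Var (pred n) else Var n
  | Lam t => Lam (subst (S k) (lift 0 u) t)
  | App t1 t2 => App (subst k u t1) (subst k u t2)
  | Bot => Bot
  end.

(* One-step reduction ->_v: contextual closure of beta_v, sigma_1, sigma_3.
   The side conditions x notin FV(P) / FV(V) are realised by lifting. *)
Inductive step : term -> term -> Prop :=
| step_betav : forall M V, is_value V -> step (App (Lam M) V) (subst 0 V M)
| step_sigma1 : forall M N P,
    step (App (App (Lam M) N) P) (App (Lam (App M (lift 0 P))) N)
| step_sigma3 : forall V M N, is_value V ->
    step (App V (App (Lam M) N)) (App (Lam (App (lift 0 V) M)) N)
| step_lam : forall M M', step M M' -> step (Lam M) (Lam M')
| step_appl : forall M M' N, step M M' -> step (App M N) (App M' N)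
| step_appr : forall M N N', step N N' -> step (App M N) (App M N').

Definition red : term -> term -> Prop := clos_refl_trans term step.

Inductive le_bot : term -> term -> Prop :=
| le_refl : forall M, le_bot M M
| le_trans : forall M N P, le_bot M N -> le_bot N P -> le_bot M P
| le_bot_var : forall n, le_bot Bot (Var n)
| le_bot_lam : forall M, le_bot Bot (Lam M)
| le_ctx_lam : forall M M', le_bot M M' -> le_bot (Lam M) (Lam M')
| le_ctx_appl : forall M M' N, le_bot M M' -> le_bot (App M N) (App M' N)
| le_ctx_appr : forall M N N', le_bot N N' -> le_bot (App M N) (App M N').

(* Approximants.  isN t  <->  t = x B A1 ... Ak  (k >= 0). *)
Inductive isA : term -> Prop :=
| A_B : forall t, isB t -> isA t
| A_C : forall a n, isA a -> isN n -> isA (App (Lam a) n)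
with isB : term -> Prop :=
| B_var : forall x, isB (Var x)
| B_lam : forall a, isA a -> isB (Lam a)
| B_bot : isB Bot
| B_neu : forall n, isN n -> isB n
with isN : term -> Prop :=
| N_head : forall x b, isB b -> isN (App (Var x) b)
| N_app : forall n a, isN n -> isA a -> isN (App n a).

Definition approx (M : term) (A : term) : Prop :=
  isA A /\ exists N, bot_free N /\ red M N /\ le_bot A N.

(* Directedness and downward closure, understood within the approximants *)
Definition directed (S : term -> Prop) : Prop :=
  forall A1 A2, S A1 -> S A2 ->
    exists A3, S A3 /\ le_bot A1 A3 /\ le_bot A2 A3.

Definition downward_closed (S : term -> Prop) : Prop :=
  forall A A', S A -> isA A' -> le_bot A' A -> S A'.

Definition ideal (S : term -> Prop) : Prop :=
  (exists A, S A) /\ directed S /\ downward_closed S.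

From Stdlib Require Import Arith Lia Relations Classical.

(* Reduction is confluent (Hindley-Rosen): beta_v is confluent by parallel
   reduction, sigma terminates and is locally confluent, and a beta_v-step and a
   sigma-step can be closed by sigma-steps on one side and at most one beta_v-step
   on the other.  An approximant below N covers no redex of N, so it stays below
   every reduct of N.  Two approximants of M therefore lie below a common reduct
   of M, and so does their syntactic join, which is again an approximant. *)

(** * Abstract rewriting *)

Section Abstract_rewriting.

Variable A : Type.
Implicit Types R S T : relation A.

Definition commute R S : Prop :=
  forall a b c, R a b -> S a c -> exists d, S b d /\ R c d.

Definition diamond R : Prop := commute R R.

Definition confluent R : Prop := diamond (clos_refl_trans A R).

Lemma clos_rt_map R S (f : A -> A) :
  (forall a b, R a b -> S (f a) (f b)) ->
  forall a b, clos_refl_trans A R a b -> clos_refl_trans A S (f a) (f b).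
Proof.
  intros Hf a b Hab. induction Hab.
  - apply rt_step. auto.
  - apply rt_refl.
  - eapply rt_trans; eauto.
Qed.

Lemma clos_refl_map R S (f : A -> A) :
  (forall a b, R a b -> S (f a) (f b)) ->
  forall a b, clos_refl A R a b -> clos_refl A S (f a) (f b).
Proof.
  intros Hf a b [b' Hab |].
  - apply r_step. auto.
  - apply r_refl.
Qed.

Lemma commute_sym R S : commute R S -> commute S R.
Proof.
  intros HRS a b c Hb Hc. destruct (HRS a c b Hc Hb) as [d [Hcd Hbd]]. eauto.
Qed.

Lemma commute_rt_of_strip R S :
  (forall a b c, R a b -> S a c ->
     exists d, clos_refl_trans A S b d /\ clos_refl A R c d) ->
  commute (clos_refl_trans A R) (clos_refl_trans A S).
Proof.
  intros Hstrip.
  assert (Hstrip_rt : forall a c, clos_refl_trans A S a c -> forall b, R a b ->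
            exists d, clos_refl_trans A S b d /\ clos_refl A R c d).
  { intros a c Hac. apply clos_rt_rt1n_iff in Hac.
    induction Hac as [a | a a1 c Ha1 Hc IH]; intros b Hb.
    - exists b. split; [apply rt_refl | apply r_step; exact Hb].
    - destruct (Hstrip a b a1 Hb Ha1) as [d1 [Hbd1 Ha1d1]].
      destruct Ha1d1 as [d1' Ha1d1' |].
      + destruct (IH d1' Ha1d1') as [d [Hd1d Hcd]].
        exists d. split; [apply rt_trans with d1'; [exact Hbd1 | exact Hd1d] | exact Hcd].
      + exists c. split; [| apply r_refl].
        eapply rt_trans; [exact Hbd1 | apply clos_rt_rt1n_iff; exact Hc]. }
  intros a b c Hab. revert c. apply clos_rt_rt1n_iff in Hab.
  induction Hab as [a | a a1 b Ha1 _ IH]; intros c Hac.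
  - exists c. split; [exact Hac | apply rt_refl].
  - destruct (Hstrip_rt a c Hac a1 Ha1) as [d1 [Ha1d1 Hcd1]].
    destruct (IH d1 Ha1d1) as [d [Hbd Hd1d]].
    exists d. split; [exact Hbd |].
    apply rt_trans with d1; [| exact Hd1d].
    destruct Hcd1; [apply rt_step; assumption | apply rt_refl].
Qed.

Lemma diamond_rt R : diamond R -> diamond (clos_refl_trans A R).
Proof.
  intros HR. apply commute_rt_of_strip.
  intros a b c Hb Hc. destruct (HR a b c Hb Hc) as [d [Hbd Hcd]].
  exists d. split; [apply rt_step | apply r_step]; assumption.
Qed.

Lemma confluent_of_diamond_between R T :
  inclusion A R T -> inclusion A T (clos_refl_trans A R) -> diamond T ->
  confluent R.
Proof.
  intros HRT HTR HT a b c Hb Hc.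
  assert (Hup : inclusion A (clos_refl_trans A R) (clos_refl_trans A T))
    by exact (clos_rt_map R T (fun x => x) HRT).
  assert (Hdown : inclusion A (clos_refl_trans A T) (clos_refl_trans A R)).
  { intros x y Hxy. apply clos_rt_idempotent.
    exact (clos_rt_map T _ (fun x => x) HTR x y Hxy). }
  destruct (diamond_rt T HT a b c (Hup _ _ Hb) (Hup _ _ Hc)) as [d [Hbd Hcd]].
  exists d. split; apply Hdown; assumption.
Qed.

Lemma diamond_union R S :
  diamond R -> diamond S -> commute R S -> diamond (union A R S).
Proof.
  intros HR HS HRS a b c [Hb | Hb] [Hc | Hc].
  - destruct (HR a b c Hb Hc) as [d [Hbd Hcd]]. exists d. split; left; assumption.
  - destruct (HRS a b c Hb Hc) as [d [Hbd Hcd]]. exists d. split; [right | left]; assumption.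
  - destruct (commute_sym R S HRS a b c Hb Hc) as [d [Hbd Hcd]].
    exists d. split; [left | right]; assumption.
  - destruct (HS a b c Hb Hc) as [d [Hbd Hcd]]. exists d. split; right; assumption.
Qed.

Lemma confluent_of_locally_confluent_decreasing R (measure : A -> nat) :
  (forall a b, R a b -> measure b < measure a) ->
  (forall a b c, R a b -> R a c ->
     exists d, clos_refl_trans A R b d /\ clos_refl_trans A R c d) ->
  confluent R.
Proof.
  intros Hdec Hloc a. induction a as [a IH] using (induction_ltof1 A measure).
  intros b c Hb Hc. apply clos_rt_rt1n_iff in Hb, Hc.
  destruct Hb as [| b1 b Hb1 Hb].
  { exists c. split; [apply clos_rt_rt1n_iff; exact Hc | apply rt_refl]. }
  destruct Hc as [| c1 c Hc1 Hc].
  { exists b. split; [apply rt_refl |].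
    apply rt_trans with b1; [apply rt_step; exact Hb1 | apply clos_rt_rt1n_iff; exact Hb]. }
  apply clos_rt_rt1n_iff in Hb, Hc.
  destruct (Hloc a b1 c1 Hb1 Hc1) as [e [Hb1e Hc1e]].
  destruct (IH b1 (Hdec _ _ Hb1) b e Hb Hb1e) as [f [Hbf Hef]].
  destruct (IH c1 (Hdec _ _ Hc1) c f Hc (rt_trans _ _ _ _ _ Hc1e Hef)) as [g [Hcg Hfg]].
  exists g. split; [eapply rt_trans; eauto | exact Hcg].
Qed.

End Abstract_rewriting.

(** * Confluence of reduction *)

Ltac index_cases :=
  repeat (cbn [lift subst pred] in *; match goal with
  | |- context [?a <=? ?b] => destruct (Nat.leb_spec a b)
  | |- context [?a =? ?b] => destruct (Nat.eqb_spec a b)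
  | |- context [?a <? ?b] => destruct (Nat.ltb_spec a b)
  end);
  try (exfalso; lia); try reflexivity; try (f_equal; lia).

Lemma lift_lift t k j : k <= j -> lift k (lift j t) = lift (S j) (lift k t).
Proof.
  revert k j. induction t; intros k j Hkj; cbn [lift].
  - index_cases.
  - f_equal. apply IHt. lia.
  - f_equal; auto.
  - reflexivity.
Qed.

Lemma subst_lift t k u : subst k u (lift k t) = t.
Proof.
  revert k u. induction t; intros k u; cbn [lift subst].
  - index_cases.
  - f_equal. apply IHt.
  - f_equal; auto.
  - reflexivity.
Qed.

Lemma lift_subst_le t i k u : i <= k ->
  lift k (subst i u t) = subst i (lift k u) (lift (S k) t).
Proof.
  revert i k u. induction t; intros i k u Hik; cbn [lift subst].
  - index_cases.
  - f_equal. rewrite IHt by lia. f_equal. symmetry. apply lift_lift. lia.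
  - f_equal; auto.
  - reflexivity.
Qed.

Lemma lift_subst_ge t k j u : k <= j ->
  lift k (subst j u t) = subst (S j) (lift k u) (lift k t).
Proof.
  revert k j u. induction t; intros k j u Hkj; cbn [lift subst].
  - index_cases.
  - f_equal. rewrite IHt by lia. f_equal. symmetry. apply lift_lift. lia.
  - f_equal; auto.
  - reflexivity.
Qed.

Lemma subst_subst t i j u v : i <= j ->
  subst j v (subst i u t) = subst i (subst j v u) (subst (S j) (lift i v) t).
Proof.
  revert i j u v. induction t; intros i j u v Hij; cbn [lift subst].
  - index_cases; rewrite subst_lift; reflexivity.
  - f_equal. rewrite IHt by lia. f_equal.
    + symmetry. apply lift_subst_ge. lia.
    + f_equal. symmetry. apply lift_lift. lia.
  - f_equal; auto.
  - reflexivity.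
Qed.

Lemma value_lift V k : is_value V -> is_value (lift k V).
Proof. destruct V; cbn; try tauto. intros _. destruct (k <=? n); exact I. Qed.

Lemma value_subst V k u : is_value V -> is_value u -> is_value (subst k u V).
Proof.
  destruct V; simpl; try tauto.
  intros _ Hu. destruct (n =? k); [exact Hu |]. destruct (k <? n); exact I.
Qed.

Lemma bot_free_lift t k : bot_free t -> bot_free (lift k t).
Proof.
  revert k. induction t; intros k Ht; simpl in *; try tauto.
  - destruct (k <=? n); exact I.
  - auto.
  - split; [apply IHt1 | apply IHt2]; tauto.
Qed.

Lemma bot_free_subst t k u : bot_free t -> bot_free u -> bot_free (subst k u t).
Proof.
  revert k u. induction t; intros k u Ht Hu; simpl in *; try tauto.
  - destruct (n =? k); [exact Hu |]. destruct (k <? n); exact I.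
  - auto using bot_free_lift.
  - split; [apply IHt1 | apply IHt2]; tauto.
Qed.

Inductive beta_step : term -> term -> Prop :=
| beta_root : forall M V, is_value V -> beta_step (App (Lam M) V) (subst 0 V M)
| beta_lam : forall M M', beta_step M M' -> beta_step (Lam M) (Lam M')
| beta_appl : forall M M' N, beta_step M M' -> beta_step (App M N) (App M' N)
| beta_appr : forall M N N', beta_step N N' -> beta_step (App M N) (App M N').

Inductive sigma_step : term -> term -> Prop :=
| sigma1 : forall M N P,
    sigma_step (App (App (Lam M) N) P) (App (Lam (App M (lift 0 P))) N)
| sigma3 : forall V M N, is_value V ->
    sigma_step (App V (App (Lam M) N)) (App (Lam (App (lift 0 V) M)) N)
| sigma_lam : forall M M', sigma_step M M' -> sigma_step (Lam M) (Lam M')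
| sigma_appl : forall M M' N, sigma_step M M' -> sigma_step (App M N) (App M' N)
| sigma_appr : forall M N N', sigma_step N N' -> sigma_step (App M N) (App M N').

Notation betas := (clos_refl_trans term beta_step).
Notation sigmas := (clos_refl_trans term sigma_step).

Lemma step_beta_or_sigma M N : step M N <-> union term beta_step sigma_step M N.
Proof.
  split.
  - induction 1 as [| | | ? ? ? [] | ? ? ? ? [] | ? ? ? ? []];
      solve [left; constructor; assumption | right; constructor; assumption].
  - intros [H | H]; induction H; constructor; assumption.
Qed.

Lemma betas_in_red M N : betas M N -> red M N.
Proof.
  apply clos_rt_map with (f := fun x => x).
  intros a b H. apply step_beta_or_sigma. left. exact H.
Qed.

Lemma sigmas_in_red M N : sigmas M N -> red M N.
Proof.
  apply clos_rt_map with (f := fun x => x).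
  intros a b H. apply step_beta_or_sigma. right. exact H.
Qed.

Lemma value_beta_step V V' : beta_step V V' -> is_value V -> is_value V'.
Proof. destruct 1; simpl; tauto. Qed.

Lemma value_sigma_step V V' : sigma_step V V' -> is_value V -> is_value V'.
Proof. destruct 1; simpl; tauto. Qed.

Lemma beta_step_lift M M' k : beta_step M M' -> beta_step (lift k M) (lift k M').
Proof.
  intros H. revert k. induction H; intros k; cbn [lift]; try (constructor; auto; fail).
  rewrite lift_subst_le by lia. constructor. apply value_lift. assumption.
Qed.

Lemma sigma_step_lift M M' k : sigma_step M M' -> sigma_step (lift k M) (lift k M').
Proof.
  intros H. revert k. induction H; intros k; cbn [lift]; try (constructor; auto; fail).
  - rewrite <- lift_lift by lia. constructor.
  - rewrite <- lift_lift by lia. constructor. apply value_lift. assumption.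
Qed.

Lemma sigma_step_subst M M' k u : sigma_step M M' -> is_value u ->
  sigma_step (subst k u M) (subst k u M').
Proof.
  intros H. revert k u. induction H; intros k u Hu; cbn [subst];
    try (constructor; auto using value_lift; fail).
  - rewrite <- lift_subst_ge by lia. constructor.
  - rewrite <- lift_subst_ge by lia. constructor. apply value_subst; assumption.
Qed.

Lemma clos_rt_app (R : relation term) :
  (forall M M' N, R M M' -> R (App M N) (App M' N)) ->
  (forall M N N', R N N' -> R (App M N) (App M N')) ->
  forall M M' N N', clos_refl_trans term R M M' -> clos_refl_trans term R N N' ->
  clos_refl_trans term R (App M N) (App M' N').
Proof.
  intros Hl Hr M M' N N' HM HN. apply rt_trans with (App M' N).
  - apply (clos_rt_map _ R R (fun x => App x N)); [intros; apply Hl; assumption | exact HM].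
  - apply (clos_rt_map _ R R (fun x => App M' x)); [intros; apply Hr; assumption | exact HN].
Qed.

Lemma clos_rt_lam (R : relation term) :
  (forall M M', R M M' -> R (Lam M) (Lam M')) ->
  forall M M', clos_refl_trans term R M M' -> clos_refl_trans term R (Lam M) (Lam M').
Proof. intros HR. apply clos_rt_map. exact HR. Qed.

Lemma sigmas_app M M' N N' : sigmas M M' -> sigmas N N' -> sigmas (App M N) (App M' N').
Proof. apply clos_rt_app; constructor; assumption. Qed.

Lemma sigmas_lam M M' : sigmas M M' -> sigmas (Lam M) (Lam M').
Proof. apply clos_rt_lam. constructor. assumption. Qed.

Lemma betas_app M M' N N' : betas M M' -> betas N N' -> betas (App M N) (App M' N').
Proof. apply clos_rt_app; constructor; assumption. Qed.

Lemma betas_lam M M' : betas M M' -> betas (Lam M) (Lam M').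
Proof. apply clos_rt_lam. constructor. assumption. Qed.

Lemma sigmas_subst_value M k V V' : sigma_step V V' -> sigmas (subst k V M) (subst k V' M).
Proof.
  revert k V V'. induction M; intros k V V' H; cbn [subst].
  - destruct (n =? k); [apply rt_step; exact H | apply rt_refl].
  - apply sigmas_lam, IHM, sigma_step_lift, H.
  - apply sigmas_app; auto.
  - apply rt_refl.
Qed.

Inductive par : term -> term -> Prop :=
| par_var : forall n, par (Var n) (Var n)
| par_bot : par Bot Bot
| par_lam : forall M M', par M M' -> par (Lam M) (Lam M')
| par_app : forall M M' N N', par M M' -> par N N' -> par (App M N) (App M' N')
| par_beta : forall M M' V V', par M M' -> par V V' -> is_value V ->
    par (App (Lam M) V) (subst 0 V' M').

Lemma par_refl M : par M M.
Proof. induction M; constructor; assumption. Qed.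

Lemma value_par V V' : par V V' -> is_value V -> is_value V'.
Proof. destruct 1; simpl; tauto. Qed.

Lemma par_lift M M' k : par M M' -> par (lift k M) (lift k M').
Proof.
  intros H. revert k. induction H; intros k; cbn [lift]; try (constructor; auto; fail).
  - destruct (k <=? n); constructor.
  - rewrite lift_subst_le by lia. constructor; auto using value_lift.
Qed.

Lemma par_subst M M' V V' k : par M M' -> par V V' -> is_value V ->
  par (subst k V M) (subst k V' M').
Proof.
  intros H. revert V V' k. induction H; intros W W' k HW HWv; cbn [subst].
  - destruct (n =? k); [exact HW |]. destruct (k <? n); constructor.
  - constructor.
  - constructor. auto using par_lift, value_lift.
  - constructor; auto.
  - rewrite subst_subst by lia.
    constructor; auto using par_lift, value_lift, value_subst.
Qed.

Lemma par_diamond : diamond term par.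
Proof.
  intros M M1 M2 H1. revert M2.
  induction H1 as [n | | M M' HM IH | M M' N N' HM IHM HN IHN
                  | M M' V V' HM IHM HV IHV Hval]; intros M2 H2.
  - inversion H2. exists (Var n). split; constructor.
  - inversion H2. exists Bot. split; constructor.
  - inversion H2 as [| | ? M'' HM'' | |]; subst.
    destruct (IH M'' HM'') as [M3 [H13 H23]].
    exists (Lam M3). split; constructor; assumption.
  - inversion H2 as [| | | ? M'' ? N'' HM'' HN'' | P P'' ? V'' HP'' HV'' Hval]; subst.
    + destruct (IHM M'' HM'') as [M3 [? ?]]. destruct (IHN N'' HN'') as [N3 [? ?]].
      exists (App M3 N3). split; constructor; assumption.
    + inversion HM as [| | ? P' HP' | |]; subst.
      destruct (IHM (Lam P'')) as [L [HL1 HL2]]; [constructor; assumption |].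
      destruct (IHN V'' HV'') as [V3 [? ?]].
      inversion HL1 as [| | ? P3 HP3 | |]; subst. inversion HL2; subst.
      exists (subst 0 V3 P3). split.
      * constructor; eauto using value_par.
      * apply par_subst; eauto using value_par.
  - inversion H2 as [| | | ? L ? V'' HL HV'' | ? M'' ? V'' HM'' HV'' ?]; subst.
    + inversion HL as [| | ? M'' HM'' | |]; subst.
      destruct (IHM M'' HM'') as [M3 [? ?]]. destruct (IHV V'' HV'') as [V3 [? ?]].
      exists (subst 0 V3 M3). split.
      * apply par_subst; eauto using value_par.
      * constructor; eauto using value_par.
    + destruct (IHM M'' HM'') as [M3 [? ?]]. destruct (IHV V'' HV'') as [V3 [? ?]].
      exists (subst 0 V3 M3). split; apply par_subst; eauto using value_par.
Qed.

Lemma beta_step_par M N : beta_step M N -> par M N.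
Proof. induction 1; constructor; auto using par_refl. Qed.

Lemma par_betas M N : par M N -> betas M N.
Proof.
  induction 1 as [| | M M' _ IH | M M' N N' _ IHM _ IHN | M M' V V' _ IHM HV IHV Hval].
  - apply rt_refl.
  - apply rt_refl.
  - apply betas_lam. exact IH.
  - apply betas_app; assumption.
  - apply rt_trans with (App (Lam M') V').
    + apply betas_app; [apply betas_lam |]; assumption.
    + apply rt_step. constructor. eapply value_par; eauto.
Qed.

Lemma beta_confluent : confluent term beta_step.
Proof.
  apply confluent_of_diamond_between with par.
  - exact beta_step_par.
  - exact par_betas.
  - exact par_diamond.
Qed.

(* Multiplicative on applications, so that the sigma-rules, which move an
   application out of the function or argument position, strictly decrease it. *)
Fixpoint size (t : term) : nat :=
  match t with
  | Var _ | Bot => 2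
  | Lam M => size M + 1
  | App M N => size M * size N
  end.

Lemma size_ge_2 t : 2 <= size t.
Proof. induction t; simpl; nia. Qed.

Lemma size_lift t k : size (lift k t) = size t.
Proof. revert k. induction t; intros k; simpl; auto. destruct (k <=? n); reflexivity. Qed.

Lemma size_sigma_step M N : sigma_step M N -> size N < size M.
Proof.
  induction 1; simpl; rewrite ?size_lift.
  - pose proof (size_ge_2 M). pose proof (size_ge_2 N). pose proof (size_ge_2 P). nia.
  - pose proof (size_ge_2 M). pose proof (size_ge_2 N). pose proof (size_ge_2 V). nia.
  - lia.
  - pose proof (size_ge_2 N). nia.
  - pose proof (size_ge_2 M). nia.
Qed.

Lemma sigma1_local_confluence M N P c : sigma_step (App (App (Lam M) N) P) c ->
  exists d, sigmas (App (Lam (App M (lift 0 P))) N) d /\ sigmas c d.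
Proof.
  intros H. inversion H as [| ? ? ? HV | | ? L' ? HL | ? ? P' HP]; subst.
  - exists (App (Lam (App M (lift 0 P))) N). split; apply rt_refl.
  - destruct HV.
  - inversion HL as [| V M0 N0 _ | | ? L ? HM | ? ? N' HN]; subst.
    + eexists. split.
      * apply rt_step. apply sigma3. exact I.
      * eapply rt_trans; apply rt_step; [apply sigma1 |].
        apply sigma_appl, sigma_lam. cbn [lift]. rewrite <- lift_lift by lia.
        apply sigma1.
    + inversion HM as [| | ? M' HM' | |]; subst. eexists. split.
      * apply rt_step. apply sigma_appl, sigma_lam, sigma_appl. exact HM'.
      * apply rt_step. apply sigma1.
    + eexists. split.
      * apply rt_step. apply sigma_appr. exact HN.
      * apply rt_step. apply sigma1.
  - eexists. split.
    + apply rt_step. apply sigma_appl, sigma_lam, sigma_appr, sigma_step_lift. exact HP.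
    + apply rt_step. apply sigma1.
Qed.

Lemma sigma3_local_confluence V M N c : is_value V ->
  sigma_step (App V (App (Lam M) N)) c ->
  exists d, sigmas (App (Lam (App (lift 0 V) M)) N) d /\ sigmas c d.
Proof.
  intros HV H. inversion H as [? ? ? | | | ? V' ? HV' | ? ? L HL]; subst.
  - destruct HV.
  - exists (App (Lam (App (lift 0 V) M)) N). split; apply rt_refl.
  - eexists. split.
    + apply rt_step. apply sigma_appl, sigma_lam, sigma_appl, sigma_step_lift. exact HV'.
    + apply rt_step. apply sigma3. eapply value_sigma_step; eassumption.
  - inversion HL as [| ? M0 N0 _ | | ? L' ? HM | ? ? N' HN]; subst.
    + eexists. split.
      * apply rt_step. apply sigma3. exact I.
      * eapply rt_trans; apply rt_step; [apply sigma3; exact HV |].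
        apply sigma_appl, sigma_lam. cbn [lift]. rewrite <- lift_lift by lia.
        apply sigma3, value_lift, HV.
    + inversion HM as [| | ? M' HM' | |]; subst. eexists. split.
      * apply rt_step. apply sigma_appl, sigma_lam, sigma_appr. exact HM'.
      * apply rt_step. apply sigma3. exact HV.
    + eexists. split.
      * apply rt_step. apply sigma_appr. exact HN.
      * apply rt_step. apply sigma3. exact HV.
Qed.

Lemma sigma_local_confluence M M1 M2 : sigma_step M M1 -> sigma_step M M2 ->
  exists d, sigmas M1 d /\ sigmas M2 d.
Proof.
  intros H1. revert M2.
  induction H1 as [M N P | V M N HV | M M' HM IH | M M' N HM IH | M N N' HN IH];
    intros M2 H2.
  - apply sigma1_local_confluence. exact H2.
  - apply sigma3_local_confluence; assumption.
  - inversion H2 as [| | ? M'' HM'' | |]; subst.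
    destruct (IH M'' HM'') as [d [? ?]].
    exists (Lam d). split; apply sigmas_lam; assumption.
  - inversion H2 as [| ? M0 N0 HV | | ? M'' ? HM'' | ? ? N' HN']; subst.
    + destruct (sigma1_local_confluence _ _ _ _ (sigma_appl _ _ N HM)) as [d [? ?]].
      exists d. split; assumption.
    + destruct (sigma3_local_confluence _ _ _ _ HV
                  (sigma_appl _ _ (App (Lam M0) N0) HM)) as [d [? ?]].
      exists d. split; assumption.
    + destruct (IH M'' HM'') as [d [? ?]].
      exists (App d N). split; apply sigmas_app; auto using rt_refl.
    + exists (App M' N'). split; apply sigmas_app; auto using rt_refl, rt_step.
  - inversion H2 as [M0 N0 ? | ? ? ? HV | | ? M' ? HM | ? ? N'' HN'']; subst.
    + destruct (sigma1_local_confluence _ _ _ _ (sigma_appr (App (Lam M0) N0) _ _ HN)) as [d [? ?]].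
      exists d. split; assumption.
    + destruct (sigma3_local_confluence _ _ _ _ HV (sigma_appr _ _ _ HN)) as [d [? ?]].
      exists d. split; assumption.
    + exists (App M' N'). split; apply sigmas_app; auto using rt_refl, rt_step.
    + destruct (IH N'' HN'') as [d [? ?]].
      exists (App M d). split; apply sigmas_app; auto using rt_refl.
Qed.

Lemma sigma_confluent : confluent term sigma_step.
Proof.
  apply confluent_of_locally_confluent_decreasing with size.
  - exact size_sigma_step.
  - exact sigma_local_confluence.
Qed.

Lemma beta_sigma_strip M M1 M2 : beta_step M M1 -> sigma_step M M2 ->
  exists d, sigmas M1 d /\ clos_refl term beta_step M2 d.
Proof.
  intros H1. revert M2.
  induction H1 as [M V HV | M M' HM IH | M M' N HM IH | M N N' HN IH]; intros M2 H2.
  - inversion H2 as [| ? ? ? HV' | | ? L ? HL | ? ? V' HV'']; subst.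
    + destruct HV.
    + inversion HL as [| | ? M' HM' | |]; subst. exists (subst 0 V M'). split.
      * apply rt_step, sigma_step_subst; assumption.
      * apply r_step. constructor. exact HV.
    + exists (subst 0 V' M). split.
      * apply sigmas_subst_value. exact HV''.
      * apply r_step. constructor. eapply value_sigma_step; eassumption.
  - inversion H2 as [| | ? M'' HM'' | |]; subst.
    destruct (IH M'' HM'') as [d [Hd Hd']].
    exists (Lam d). split.
    + apply sigmas_lam. exact Hd.
    + apply (clos_refl_map _ beta_step beta_step Lam); [constructor; assumption | exact Hd'].
  - inversion H2 as [P Q R | ? P Q HV | | ? M'' ? HM'' | ? ? N' HN]; subst.
    + inversion HM as [? ? HQ | | ? L ? HL | ? ? Q' HQ]; subst.
      * exists (App (subst 0 Q P) N). split; [apply rt_refl |].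
        apply r_step.
        replace (App (subst 0 Q P) N) with (subst 0 Q (App P (lift 0 N)))
          by (cbn [subst]; rewrite subst_lift; reflexivity).
        constructor. exact HQ.
      * inversion HL as [| ? P' HP | |]; subst. eexists. split.
        -- apply rt_step, sigma1.
        -- apply r_step, beta_appl, beta_lam, beta_appl. exact HP.
      * eexists. split.
        -- apply rt_step, sigma1.
        -- apply r_step, beta_appr. exact HQ.
    + eexists. split.
      * apply rt_step, sigma3. eapply value_beta_step; eassumption.
      * apply r_step, beta_appl, beta_lam, beta_appl, beta_step_lift. exact HM.
    + destruct (IH M'' HM'') as [d [Hd Hd']]. exists (App d N). split.
      * apply sigmas_app; [exact Hd | apply rt_refl].
      * apply (clos_refl_map _ beta_step beta_step (fun x => App x N));
          [constructor; assumption | exact Hd'].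
    + exists (App M' N'). split.
      * apply rt_step, sigma_appr. exact HN.
      * apply r_step, beta_appl. exact HM.
  - inversion H2 as [P Q ? | ? P Q HV | | ? M' ? HM | ? ? N'' HN'']; subst.
    + eexists. split.
      * apply rt_step, sigma1.
      * apply r_step, beta_appl, beta_lam, beta_appr, beta_step_lift. exact HN.
    + inversion HN as [? ? HQ | | ? L ? HL | ? ? Q' HQ]; subst.
      * exists (App M (subst 0 Q P)). split; [apply rt_refl |].
        apply r_step.
        replace (App M (subst 0 Q P)) with (subst 0 Q (App (lift 0 M) P))
          by (cbn [subst]; rewrite subst_lift; reflexivity).
        constructor. exact HQ.
      * inversion HL as [| ? P' HP | |]; subst. eexists. split.
        -- apply rt_step, sigma3. exact HV.
        -- apply r_step, beta_appl, beta_lam, beta_appr. exact HP.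
      * eexists. split.
        -- apply rt_step, sigma3. exact HV.
        -- apply r_step, beta_appr. exact HQ.
    + exists (App M' N'). split.
      * apply rt_step, sigma_appl. exact HM.
      * apply r_step, beta_appr. exact HN.
    + destruct (IH N'' HN'') as [d [Hd Hd']]. exists (App M d). split.
      * apply sigmas_app; [apply rt_refl | exact Hd].
      * apply (clos_refl_map _ beta_step beta_step (fun x => App M x));
          [constructor; assumption | exact Hd'].
Qed.

Lemma step_confluent : confluent term step.
Proof.
  apply confluent_of_diamond_between with (union term betas sigmas).
  - intros M N H. apply step_beta_or_sigma in H as [H | H];
      [left | right]; apply rt_step; exact H.
  - intros M N [H | H]; [apply betas_in_red | apply sigmas_in_red]; exact H.
  - apply diamond_union.
    + exact beta_confluent.
    + exact sigma_confluent.
    + apply commute_rt_of_strip. exact beta_sigma_strip.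
Qed.

Lemma bot_free_step M N : step M N -> bot_free M -> bot_free N.
Proof.
  induction 1; simpl; intros; try tauto.
  - apply bot_free_subst; tauto.
  - repeat split; try tauto. apply bot_free_lift; tauto.
  - repeat split; try tauto. apply bot_free_lift; tauto.
Qed.

Lemma bot_free_red M N : red M N -> bot_free M -> bot_free N.
Proof. induction 1; eauto using bot_free_step. Qed.

(** * Approximants *)

Inductive le_syn : term -> term -> Prop :=
| le_syn_bot : le_syn Bot Bot
| le_syn_bot_value : forall t, is_value t -> le_syn Bot t
| le_syn_var : forall n, le_syn (Var n) (Var n)
| le_syn_lam : forall a b, le_syn a b -> le_syn (Lam a) (Lam b)
| le_syn_app : forall a1 a2 b1 b2,
    le_syn a1 b1 -> le_syn a2 b2 -> le_syn (App a1 a2) (App b1 b2).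

Lemma le_syn_refl t : le_syn t t.
Proof. induction t; constructor; assumption. Qed.

Lemma value_le_syn a b : le_syn a b -> is_value a -> is_value b.
Proof. destruct 1; simpl; tauto. Qed.

Lemma le_syn_trans a b c : le_syn a b -> le_syn b c -> le_syn a c.
Proof.
  intros Hab. revert c.
  induction Hab as [| t Ht | n | a b _ IH | a1 a2 b1 b2 _ IH1 _ IH2]; intros c Hbc.
  - exact Hbc.
  - constructor. eapply value_le_syn; eassumption.
  - exact Hbc.
  - inversion Hbc; subst. constructor. auto.
  - inversion Hbc; subst. constructor; auto.
Qed.

Lemma le_bot_iff_le_syn a b : le_bot a b <-> le_syn a b.
Proof.
  split.
  - induction 1.
    + apply le_syn_refl.
    + eapply le_syn_trans; eassumption.
    + constructor. exact I.
    + constructor. exact I.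
    + constructor. assumption.
    + constructor; [assumption | apply le_syn_refl].
    + constructor; [apply le_syn_refl | assumption].
  - induction 1 as [| t Ht | n | a b _ IH | a1 a2 b1 b2 _ IH1 _ IH2].
    + apply le_refl.
    + destruct t; simpl in Ht; try contradiction; constructor.
    + apply le_refl.
    + constructor. exact IH.
    + apply le_trans with (App b1 a2); constructor; assumption.
Qed.

Lemma isA_lam_inv a : isA (Lam a) -> isA a.
Proof.
  intros H. inversion H as [? HB |]; subst.
  inversion HB as [| ? Ha | | ? HN]; subst; [exact Ha | inversion HN].
Qed.

Lemma isN_app_inv a b : isN (App a b) -> isA a /\ isA b.
Proof.
  intros H. inversion H as [x ? Hb | ? ? Ha Hb]; subst.
  - split; [apply A_B, B_var | apply A_B; exact Hb].
  - split; [apply A_B, B_neu |]; assumption.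
Qed.

Lemma isA_app_inv a b : isA (App a b) -> isA a /\ isA b.
Proof.
  intros H. inversion H as [? HB | ? ? Ha Hb]; subst.
  - inversion HB as [| | | ? HN]; subst. apply isN_app_inv. exact HN.
  - split; [apply A_B, B_lam | apply A_B, B_neu]; assumption.
Qed.

Lemma neutral_not_le_value n v : isN n -> le_syn n v -> is_value v -> False.
Proof. intros Hn Hle Hv. inversion Hn; subst; inversion Hle; subst; destruct Hv. Qed.

Lemma neutral_not_le_redex n M N : isN n -> le_syn n (App (Lam M) N) -> False.
Proof.
  intros Hn Hle. inversion Hn as [x b _ | n' a Hn' _]; subst;
    inversion Hle as [| | | | ? ? ? ? Hhead _]; subst.
  - inversion Hhead.
  - apply (neutral_not_le_value n' (Lam M)); [assumption | assumption | exact I].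
Qed.

Lemma isB_not_le_redex b M N : isB b -> le_syn b (App (Lam M) N) -> False.
Proof.
  intros Hb Hle. inversion Hb as [| | | ? Hn]; subst; inversion Hle; subst;
    try contradiction.
  eapply neutral_not_le_redex; eassumption.
Qed.

Lemma neutral_head_not_le_lam a1 a2 M : isN (App a1 a2) -> le_syn a1 (Lam M) -> False.
Proof.
  intros Hn Hle. inversion Hn as [x b _ | n a Hn' _]; subst.
  - inversion Hle.
  - eapply neutral_not_le_value; [eassumption | eassumption | exact I].
Qed.

Lemma approximant_not_le_beta_redex A M V :
  isA A -> le_syn A (App (Lam M) V) -> is_value V -> False.
Proof.
  intros HA Hle HV. inversion HA as [? HB | a n _ Hn]; subst.
  - eapply isB_not_le_redex; eassumption.
  - inversion Hle as [| | | | ? ? ? ? _ Harg]; subst.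
    eapply neutral_not_le_value; eassumption.
Qed.

Lemma approximant_not_le_sigma1_redex A M N P :
  isA A -> le_syn A (App (App (Lam M) N) P) -> False.
Proof.
  intros HA Hle.
  inversion Hle as [| ? HV | | | a1 a2 ? ? Hfun _]; subst; [destruct HV |].
  inversion HA as [? HB | a n _ Hn]; subst.
  - inversion HB as [| | | ? Hn]; subst.
    inversion Hn as [x b _ | n' a Hn' _]; subst.
    + inversion Hfun.
    + eapply neutral_not_le_redex; eassumption.
  - inversion Hfun.
Qed.

Lemma approximant_not_le_sigma3_redex A V M N :
  isA A -> le_syn A (App V (App (Lam M) N)) -> is_value V -> False.
Proof.
  intros HA Hle HV.
  inversion Hle as [| ? HApp | | | a1 a2 ? ? Hfun Harg]; subst; [destruct HApp |].
  inversion HA as [? HB | a n _ Hn]; subst.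
  - inversion HB as [| | | ? Hn]; subst.
    inversion Hn as [x b Hb | n' a Hn' _]; subst.
    + eapply isB_not_le_redex; eassumption.
    + eapply neutral_not_le_value; eassumption.
  - eapply neutral_not_le_redex; eassumption.
Qed.

Lemma le_syn_step A N N' : step N N' -> isA A -> le_syn A N -> le_syn A N'.
Proof.
  intros H. revert A.
  induction H as [M V HV | M N P | V M N HV | M M' _ IH | M M' N _ IH | M N N' _ IH];
    intros A HA Hle.
  - exfalso. eapply approximant_not_le_beta_redex; eassumption.
  - exfalso. eapply approximant_not_le_sigma1_redex; eassumption.
  - exfalso. eapply approximant_not_le_sigma3_redex; eassumption.
  - inversion Hle as [| | | a ? Ha |]; subst.
    + constructor. exact I.
    + constructor. apply IH; [apply isA_lam_inv |]; assumption.
  - inversion Hle as [| ? HApp | | | a1 a2 ? ? Ha1 Ha2]; subst; [destruct HApp |].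
    destruct (isA_app_inv _ _ HA). constructor; auto.
  - inversion Hle as [| ? HApp | | | a1 a2 ? ? Ha1 Ha2]; subst; [destruct HApp |].
    destruct (isA_app_inv _ _ HA). constructor; auto.
Qed.

Lemma le_syn_red A N N' : red N N' -> isA A -> le_syn A N -> le_syn A N'.
Proof. induction 1; eauto using le_syn_step. Qed.

(* For terms with a common upper bound the last clause is only reached with two
   equal variables. *)
Fixpoint join (a b : term) : term :=
  match a, b with
  | Bot, _ => b
  | _, Bot => a
  | Lam a', Lam b' => Lam (join a' b')
  | App a1 a2, App b1 b2 => App (join a1 b1) (join a2 b2)
  | _, _ => a
  end.

Lemma bot_le_syn_of_common_bound N b : le_syn Bot N -> le_syn b N -> le_syn Bot b.
Proof.
  intros HBot Hb. inversion HBot as [| ? HN | | |]; subst.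
  - inversion Hb; subst; constructor.
  - inversion Hb; subst; try constructor; simpl in *; tauto.
Qed.

Lemma le_syn_join a b N : le_syn a N -> le_syn b N ->
  le_syn a (join a b) /\ le_syn b (join a b) /\ le_syn (join a b) N.
Proof.
  intros Ha. revert b.
  induction Ha as [| t Ht | n | a N Ha IH | a1 a2 N1 N2 _ IH1 _ IH2]; intros b Hb.
  - simpl. repeat split; auto using le_syn_refl.
    apply bot_le_syn_of_common_bound with Bot; [constructor | exact Hb].
  - simpl. repeat split; auto using le_syn_refl.
    apply bot_le_syn_of_common_bound with t; [constructor; exact Ht | exact Hb].
  - inversion Hb; subst; simpl; repeat split; constructor; exact I.
  - inversion Hb as [| ? HL | | b' ? Hb' |]; subst; simpl.
    + repeat split; [apply le_syn_refl | constructor; exact I | constructor; exact Ha].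
    + destruct (IH b' Hb') as [? [? ?]]. repeat split; constructor; assumption.
  - inversion Hb as [| ? HApp | | | b1 b2 ? ? Hb1 Hb2]; subst; [destruct HApp |].
    simpl. destruct (IH1 b1 Hb1) as [? [? ?]]. destruct (IH2 b2 Hb2) as [? [? ?]].
    repeat split; constructor; assumption.
Qed.

Lemma join_shapes a b N : le_syn a N -> le_syn b N ->
  (isA a -> isA b -> isA (join a b)) /\
  (isB a -> isB b -> isB (join a b)) /\
  (isN a -> isN b -> isN (join a b)).
Proof.
  intros Ha. revert b.
  induction Ha as [| t Ht | n | a N Ha IH | a1 a2 N1 N2 Ha1 IH1 Ha2 IH2]; intros b Hb.
  - simpl. repeat split; intros H1 H2; [exact H2 | exact H2 | inversion H1].
  - simpl. repeat split; intros H1 H2; [exact H2 | exact H2 | inversion H1].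
  - inversion Hb; subst; simpl;
      (repeat split; intros H1 H2; [exact H1 | exact H1 | inversion H1]).
  - inversion Hb as [| ? HL | | b' ? Hb' |]; subst; simpl.
    + repeat split; intros H1 H2; [exact H1 | exact H1 | inversion H1].
    + destruct (IH b' Hb') as [IA _]. repeat split; intros HA HB.
      * apply A_B, B_lam, IA; apply isA_lam_inv; assumption.
      * apply B_lam, IA; apply isA_lam_inv, A_B; assumption.
      * inversion HA.
  - inversion Hb as [| ? HApp | | | b1 b2 ? ? Hb1 Hb2]; subst; [destruct HApp |].
    destruct (IH1 b1 Hb1) as [IA1 [IB1 IN1]]. destruct (IH2 b2 Hb2) as [IA2 [IB2 IN2]].
    simpl.
    assert (HN : isN (App a1 a2) -> isN (App b1 b2) -> isN (App (join a1 b1) (join a2 b2))).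
    { intros Han Hbn.
      inversion Han as [x ? Hx | ? ? Han1 Han2]; subst;
        inversion Hbn as [y ? Hy | ? ? Hbn1 Hbn2]; subst.
      - inversion Ha1; subst. inversion Hb1; subst. simpl. apply N_head. auto.
      - inversion Ha1; subst. inversion Hbn1; subst; inversion Hb1.
      - inversion Hb1; subst. inversion Han1; subst; inversion Ha1.
      - apply N_app; auto. }
    repeat split.
    + intros HA HB.
      inversion HA as [? HAB | a1' ? HA1 HA2]; subst;
        inversion HB as [? HBB | b1' ? HB1 HB2]; subst.
      * inversion HAB; inversion HBB; subst. apply A_B, B_neu. auto.
      * inversion Hb1; subst. inversion HAB; subst.
        exfalso. eapply neutral_head_not_le_lam; eassumption.
      * inversion Ha1; subst. inversion HBB; subst.
        exfalso. eapply neutral_head_not_le_lam; eassumption.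
      * apply A_C; [| auto]. apply isA_lam_inv, IA1; apply A_B, B_lam; assumption.
    + intros HAB HBB. inversion HAB; inversion HBB; subst. apply B_neu. auto.
    + exact HN.
Qed.

Lemma approx_directed M : bot_free M -> directed (approx M).
Proof.
  intros HM A1 A2 [HA1 [N1 [_ [HMN1 HA1N1]]]] [HA2 [N2 [_ [HMN2 HA2N2]]]].
  destruct (step_confluent M N1 N2 HMN1 HMN2) as [N [HN1N HN2N]].
  apply le_bot_iff_le_syn in HA1N1, HA2N2.
  pose proof (le_syn_red A1 N1 N HN1N HA1 HA1N1) as HA1N.
  pose proof (le_syn_red A2 N2 N HN2N HA2 HA2N2) as HA2N.
  destruct (le_syn_join A1 A2 N HA1N HA2N) as [H1 [H2 HN]].
  exists (join A1 A2). rewrite !le_bot_iff_le_syn. repeat split; try assumption.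
  - apply (join_shapes A1 A2 N HA1N HA2N); assumption.
  - exists N. repeat split.
    + apply bot_free_red with M; [eapply rt_trans |]; eassumption.
    + eapply rt_trans; eassumption.
    + apply le_bot_iff_le_syn. exact HN.
Qed.

Lemma approx_downward_closed M : downward_closed (approx M).
Proof.
  intros A A' [_ [N [HN [HMN HAN]]]] HA' HA'A.
  split; [exact HA' |]. exists N. repeat split; try assumption.
  apply le_trans with A; assumption.
Qed.

Theorem proposition2p7 : forall M : term, bot_free M ->
  (forall A, ~ approx M A) \/ ideal (approx M).
Proof.
  intros M HM.
  destruct (classic (exists A, approx M A)) as [Hne | Hempty].
  - right. split; [exact Hne | split].
    + apply approx_directed. exact HM.
    + apply approx_downward_closed.
  - left. intros A HA. apply Hempty. exists A. exact HA.
Qed.
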